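(* Let $H$ be a Hermitian operator on a $d$-dimensional Hilbert space with spectral decomposition $H=\sum_{i=1}^M\lambda_i\Pi_i$, where $M\ge 2$, $\lambda_M>\cdots>\lambda_1$ are the distinct eigenvalues and $\Pi_i$ the spectral projections. Let $\Delta=\lambda_2-\lambda_1$, $d_G=\operatorname{Tr}[\Pi_1]$, and $\varepsilon\in(0,1)$. If $$\beta=\frac{1}{\Delta}\ln\!\left[\left(\frac{1-\varepsilon}{\varepsilon}\right)\left(\frac{d-d_G}{d_G}\right)\right]$$ and $\beta\ge 0$, then $$\frac{1}{2}\left\|\frac{e^{-\beta H}}{\operatorname{Tr}[e^{-\beta H}]}-\frac{\Pi_1}{\operatorname{Tr}[\Pi_1]}\right\|_1\le\varepsilon.$$
   Context: $\|A\|_1=\operatorname{Tr}[\sqrt{A^\dagger A}]$ is the trace norm. *)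

From HB Require Import structures.
From mathcomp Require Import all_boot all_order all_algebra.
From mathcomp Require Import complex.
From mathcomp Require Import all_classical all_reals all_analysis.
Set Implicit Arguments. Unset Strict Implicit. Unset Printing Implicit Defensive.
Import Order.TTheory GRing.Theory Num.Theory.
Local Open Scope ring_scope.
Local Open Scope classical_set_scope.
Import numFieldNormedType.Exports.

Section Defs.
Variable R : realType.
Local Notation C := (R[i]).

Definition dagger (m n : nat) (A : 'M[C]_(m, n)) : 'M[C]_(n, m) := (map_mx (@conjc R) A)^T.

Definition herm_mx (d : nat) (A : 'M[C]_d) : Prop := dagger A = A.

Definition psd_mx (d : nat) (S : 'M[C]_d) : Prop :=
  herm_mx S /\ forall v : 'cV[C]_d, 0 <= complex.Re (((dagger v) *m S *m v) 0 0).

Definition orth_proj (d : nat) (P : 'M[C]_d) : Prop :=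
  P *m P = P /\ herm_mx P.

(* the (unique) positive semidefinite square root of a PSD matrix;
   chosen classically, 0 if none exists *)
Definition psd_sqrt (d : nat) (B : 'M[C]_d) : 'M[C]_d :=
  match pselect (exists S : 'M[C]_d, psd_mx S /\ S *m S = B) with
  | left h => sval (cid h)
  | right _ => 0
  end.

Definition trace_norm (d : nat) (A : 'M[C]_d) : R :=
  complex.Re (\tr (psd_sqrt (dagger A *m A))).

Definition is_expm (d : nat) (A E : 'M[C]_d) : Prop :=
  forall i j : 'I_d,
    (fun n : nat => complex.Re ((\sum_(k < n) ((k`!)%:R)^-1 *: (A ^+ k)) i j)) @ \oo
      --> complex.Re (E i j) /\
    (fun n : nat => complex.Im ((\sum_(k < n) ((k`!)%:R)^-1 *: (A ^+ k)) i j)) @ \oo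
      --> complex.Im (E i j).

Definition expm (d : nat) (A : 'M[C]_d) : 'M[C]_d :=
  match pselect (exists E : 'M[C]_d, is_expm A E) with
  | left h => sval (cid h)
  | right _ => 0
  end.

End Defs.

From HB Require Import structures.
From mathcomp Require Import all_boot all_order all_algebra.
From mathcomp Require Import complex.
From mathcomp Require Import all_classical all_reals all_analysis.
From mathcomp Require Import ring lra.
Import Order.TTheory GRing.Theory Num.Theory.
Import numFieldNormedType.Exports.
Local Open Scope ring_scope.
Local Open Scope classical_set_scope.

(** With p_j the Gibbs weight of the eigenspace Pi_j, the difference of the two
    states is sigma = sum_j c_j Pi_j with c_j Tr Pi_j = p_j - delta_j0.  For any
    Hermitian square root S of sigma^dagger sigma, Tr S = sum_j Tr (Pi_j S Pi_j),
    and weighted AM-GM in the Hilbert-Schmidt inner product bounds each term by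
    |c_j| Tr Pi_j; hence ||sigma||_1 <= sum_j |p_j - delta_j0| = 2 (1 - p_0).
    The choice of beta makes exp (-beta Delta) = eps d_G / ((1 - eps) (d - d_G)),
    and since beta >= 0 every excited weight is at most exp (-beta lambda_1),
    which gives 1 - p_0 <= eps. *)

Section ComplexMatrix.
Local Set Implicit Arguments.
Local Unset Strict Implicit.
Variable R : realType.
Local Notation C := R[i].

Lemma Re_realcM (x : R) (z : C) : complex.Re (x%:C%C * z) = x * complex.Re z.
Proof. by case: z => a b /=; ring. Qed.

Lemma Im_realcM (x : R) (z : C) : complex.Im (x%:C%C * z) = x * complex.Im z.
Proof. by case: z => a b /=; ring. Qed.

Lemma Re_conjcM_le (t : R) (a b : C) : 0 < t ->
  2 * complex.Re (a^*%C * b) <=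
  t * complex.Re (a^*%C * a) + complex.Re (b^*%C * b) / t.
Proof.
case: a b => [ar ai] [br bi] t_gt0 /=; rewrite -subr_ge0.
rewrite (_ : _ - _ = ((t * ar - br) ^+ 2 + (t * ai - bi) ^+ 2) / t).
  by rewrite divr_ge0 ?addr_ge0 ?sqr_ge0 ?ltW.
by field; rewrite gt_eqF.
Qed.

Lemma conjcM_ge0 (z : C) : 0 <= z^*%C * z.
Proof. by rewrite mulrC mulcJ_ge0. Qed.

Lemma daggerE m n (A : 'M[C]_(m, n)) i j : dagger A i j = (A j i)^*%C.
Proof. by rewrite /dagger !mxE. Qed.

Lemma dagger_mulmx m n p (A : 'M[C]_(m, n)) (B : 'M[C]_(n, p)) :
  dagger (A *m B) = dagger B *m dagger A.
Proof. by rewrite /dagger map_mxM trmx_mul. Qed.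

Lemma mxtrace_dagger_mulmx n (A B : 'M[C]_n) :
  \tr (dagger A *m B) = \sum_j \sum_k (A k j)^*%C * B k j.
Proof.
apply: eq_bigr => j _; rewrite mxE; apply: eq_bigr => k _.
by rewrite daggerE.
Qed.

Lemma Re_mxtrace_dagger_mulmx_le n (A B : 'M[C]_n) (t : R) : 0 < t ->
  2 * complex.Re (\tr (dagger A *m B)) <=
  t * complex.Re (\tr (dagger A *m A)) + complex.Re (\tr (dagger B *m B)) / t.
Proof.
move=> t_gt0; rewrite !mxtrace_dagger_mulmx !raddf_sum.
rewrite !mulr_sumr mulr_suml -big_split /=; apply: ler_sum => j _.
rewrite !raddf_sum !mulr_sumr mulr_suml -big_split /=; apply: ler_sum => k _.
exact: Re_conjcM_le.
Qed.

Lemma mxtrace_dagger_self_ge0 n (A : 'M[C]_n) : 0 <= \tr (dagger A *m A).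
Proof.
rewrite mxtrace_dagger_mulmx; apply: sumr_ge0 => j _.
by apply: sumr_ge0 => k _; exact: conjcM_ge0.
Qed.

Lemma mxtrace_dagger_self_eq0 n (A : 'M[C]_n) :
  (\tr (dagger A *m A) == 0) = (A == 0).
Proof.
apply/eqP/eqP => [|->]; last by rewrite mulmx0 linear0.
rewrite mxtrace_dagger_mulmx => tr0; apply/matrixP => k j.
have col_ge0 j' : 0 <= \sum_k' (A k' j')^*%C * A k' j'.
  by apply: sumr_ge0 => k' _; exact: conjcM_ge0.
move: (psumr_eq0P (fun j' _ => col_ge0 j') tr0 (i := j) isT).
move/(psumr_eq0P (fun k' _ => conjcM_ge0 (A k' j)))/(_ k isT)/eqP.
by rewrite mulf_eq0 conjc_eq0 orbb mxE => /eqP.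
Qed.

Lemma mxtrace_orth_proj n (P : 'M[C]_n) :
  orth_proj P -> \tr P = \tr (dagger P *m P).
Proof. by case=> P_idem P_herm; rewrite P_herm P_idem. Qed.

Lemma mxtrace_orth_proj_real n (P : 'M[C]_n) :
  orth_proj P -> (complex.Re (\tr P))%:C%C = \tr P.
Proof.
move=> /mxtrace_orth_proj trP; apply: RRe_real; apply: ger0_real.
by rewrite trP mxtrace_dagger_self_ge0.
Qed.

Lemma Re_mxtrace_orth_proj_ge0 n (P : 'M[C]_n) :
  orth_proj P -> 0 <= complex.Re (\tr P).
Proof.
move=> /mxtrace_orth_proj trP.
by move: (mxtrace_dagger_self_ge0 P); rewrite -trP lecE => /andP[].
Qed.

Lemma Re_mxtrace_orth_proj_gt0 n (P : 'M[C]_n) :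
  orth_proj P -> P != 0 -> 0 < complex.Re (\tr P).
Proof.
move=> /mxtrace_orth_proj trP P_neq0.
have : 0 < \tr P.
  by rewrite lt_def trP mxtrace_dagger_self_eq0 P_neq0 mxtrace_dagger_self_ge0.
by rewrite ltcE => /andP[].
Qed.

Lemma cvg_expR_partial_sum (y : R) :
  (fun n : nat => \sum_(k < n) (k`!%:R)^-1 * y ^+ k) @ \oo --> expR y.
Proof.
rewrite expRE /pseries -exp_coeffE.
rewrite (_ : (fun n => _) = series (exp_coeff y)); first exact: is_cvg_series_exp_coeff.
apply/funext => n; rewrite /series /= big_mkord; apply: eq_bigr => k _.
by rewrite /exp_coeff /= mulrC.
Qed.

Lemma is_expmE n (A E : 'M[C]_n) : is_expm A E -> expm A = E.
Proof.
move=> AE; rewrite /expm; case: pselect => [h|]; last by case; exists E.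
case: (cid h) => E' AE' /=; apply/matrixP => i j.
have [ReE' ImE'] := AE' i j; have [ReE ImE] := AE i j.
rewrite [E' i j]complexE [E i j]complexE.
by congr (_%:C%C + _ * _%:C%C); [exact: cvg_unique ReE' ReE | exact: cvg_unique ImE' ImE].
Qed.

End ComplexMatrix.

Section DistanceToPointMass.
Local Set Implicit Arguments.
Local Unset Strict Implicit.
Variables (R : realDomainType) (I : finType).

Lemma sum_norm_sub_delta (p : I -> R) (i0 : I) :
  (forall j, 0 <= p j) -> \sum_j p j = 1 ->
  \sum_j `|p j - (j == i0)%:R| = 2 * (1 - p i0).
Proof.
move=> p_ge0 p_sum1.
have rest : \sum_(j | j != i0) p j = 1 - p i0.
  by rewrite -p_sum1 [in RHS](bigD1 i0) //= addrAC subrr add0r.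
rewrite (bigD1 i0) //= eqxx ler0_norm; last by rewrite subr_le0 -subr_ge0 -rest sumr_ge0.
under eq_bigr => j /negbTE j_neq do rewrite j_neq subr0 ger0_norm //.
by rewrite rest /= opprB -mulr2n mulr_natl.
Qed.

End DistanceToPointMass.

Section SpectralCalculus.
Local Set Implicit Arguments.
Local Unset Strict Implicit.
Variables (R : realType) (d M : nat).
Local Notation C := R[i].

Definition resolution_of_identity (P : 'I_M -> 'M[C]_d) : Prop :=
  [/\ forall i, orth_proj (P i),
      forall i j, i != j -> P i *m P j = 0
    & \sum_i P i = 1%:M].

Variable P : 'I_M -> 'M[C]_d.
Hypothesis P_res : resolution_of_identity P.

Let P_proj i : orth_proj (P i). Proof. by case: P_res. Qed.
Let P_idem i : P i *m P i = P i. Proof. by case: (P_proj i). Qed.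
Let P_herm i : dagger (P i) = P i. Proof. by case: (P_proj i). Qed.
Let P_orth i j : i != j -> P i *m P j = 0. Proof. by case: P_res => _ + _; apply. Qed.
Let P_sum : \sum_i P i = 1%:M. Proof. by case: P_res. Qed.

Lemma proj_mulmx_spectral (a : 'I_M -> C) i :
  P i *m (\sum_j a j *: P j) = a i *: P i.
Proof.
rewrite mulmx_sumr (bigD1 i) //= big1 ?addr0; first by rewrite -scalemxAr P_idem.
by move=> j ji; rewrite -scalemxAr P_orth ?scaler0 // eq_sym.
Qed.

Lemma spectral_mulmx (a b : 'I_M -> C) :
  (\sum_j a j *: P j) *m (\sum_j b j *: P j) = \sum_j (a j * b j) *: P j.
Proof.
rewrite mulmx_suml; apply: eq_bigr => j _.
by rewrite -scalemxAl proj_mulmx_spectral scalerA.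
Qed.

Lemma spectral_expr (a : 'I_M -> C) k :
  (\sum_j a j *: P j) ^+ k = \sum_j (a j ^+ k) *: P j.
Proof.
elim: k => [|k IHk].
  by rewrite expr0 -[1]/(1%:M) -P_sum; apply: eq_bigr => j _; rewrite scale1r.
by rewrite exprS IHk -mulmxE spectral_mulmx; apply: eq_bigr => j _; rewrite exprS.
Qed.

Lemma spectral_entry (a : 'I_M -> C) r s :
  (\sum_j a j *: P j) r s = \sum_j a j * P j r s.
Proof. by rewrite summxE; apply: eq_bigr => j _; rewrite mxE. Qed.

Lemma dagger_spectral (x : 'I_M -> R) :
  dagger (\sum_j (x j)%:C%C *: P j) = \sum_j (x j)%:C%C *: P j.
Proof.
apply/matrixP => r s; rewrite daggerE !spectral_entry rmorph_sum /=.
by apply: eq_bigr => j _; rewrite rmorphM /= oppr0 -daggerE P_herm.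
Qed.

Lemma sum_mxtrace_proj : \sum_j \tr (P j) = d%:R.
Proof. by rewrite -raddf_sum P_sum /= mxtrace1. Qed.

Lemma mxtrace_spectral (x : 'I_M -> R) :
  \tr (\sum_j (x j)%:C%C *: P j) = (\sum_j x j * complex.Re (\tr (P j)))%:C%C.
Proof.
rewrite raddf_sum rmorph_sum /=; apply: eq_bigr => j _.
by rewrite mxtraceZ rmorphM /= mxtrace_orth_proj_real.
Qed.

Lemma expm_spectral (x : 'I_M -> R) :
  expm (\sum_j (x j)%:C%C *: P j) = \sum_j (expR (x j))%:C%C *: P j.
Proof.
apply: is_expmE => r s.
have partialE n : (\sum_(k < n) (k`!%:R)^-1 *: (\sum_j (x j)%:C%C *: P j) ^+ k) r s
    = \sum_j (\sum_(k < n) (k`!%:R)^-1 * x j ^+ k)%:C%C * P j r s.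
  under eq_bigr do rewrite spectral_expr scaler_sumr.
  rewrite exchange_big -spectral_entry; congr (fun_of_matrix _ r s).
  apply: eq_bigr => j _; rewrite rmorph_sum scaler_suml; apply: eq_bigr => k _.
  by rewrite scalerA rmorphM fmorphV rmorph_nat rmorphXn.
have cvg_part (f : {additive C -> R}) :
    (forall y z, f (y%:C%C * z) = y * f z) ->
    (fun n => f ((\sum_(k < n) (k`!%:R)^-1 *: (\sum_j (x j)%:C%C *: P j) ^+ k) r s))
      @ \oo --> f ((\sum_j (expR (x j))%:C%C *: P j) r s).
  move=> fM; rewrite spectral_entry raddf_sum (eq_bigr _ (fun j _ => fM _ _)).
  under eq_fun do rewrite partialE raddf_sum (eq_bigr _ (fun j _ => fM _ _)).
  have cvg_j j : (fun n => (\sum_(k < n) (k`!%:R)^-1 * x j ^+ k) * f (P j r s))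
      @ \oo --> expR (x j) * f (P j r s).
    by apply: cvgMr_tmp; exact: cvg_expR_partial_sum.
  apply: cvg_big => [|j _]; [exact: add_continuous | exact: cvg_j].
by split; apply: cvg_part; [exact: Re_realcM | exact: Im_realcM].
Qed.

Lemma Re_mxtrace_herm_le (S : 'M[C]_d) (c : 'I_M -> R) :
  herm_mx S -> S *m S = \sum_j (c j ^+ 2)%:C%C *: P j ->
  complex.Re (\tr S) <= \sum_j `|c j| * complex.Re (\tr (P j)).
Proof.
move=> S_herm SS.
have trS : \tr S = \sum_j \tr (dagger (P j) *m (S *m P j)).
  rewrite -{1}(mulmx1 S) -P_sum mulmx_sumr raddf_sum; apply: eq_bigr => j _.
  by rewrite P_herm mxtrace_mulC -mulmxA P_idem.
have SP_norm j : dagger (S *m P j) *m (S *m P j) = (c j ^+ 2)%:C%C *: P j.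
  rewrite dagger_mulmx P_herm S_herm mulmxA -(mulmxA (P j)) SS.
  by rewrite proj_mulmx_spectral -scalemxAl P_idem.
rewrite trS raddf_sum; apply: ler_sum => j _.
have [c0|c_neq0] := eqVneq (c j) 0.
  have /eqP-> : S *m P j == 0.
    by rewrite -mxtrace_dagger_self_eq0 SP_norm c0 expr2 mulr0 rmorph0 scale0r linear0.
  by rewrite mulmx0 linear0 c0 normr0 mul0r.
have c_gt0 : 0 < `|c j| by rewrite normr_gt0.
have := Re_mxtrace_dagger_mulmx_le (P j) (S *m P j) c_gt0.
rewrite SP_norm mxtraceZ Re_realcM -(mxtrace_orth_proj (P_proj j)).
rewrite -real_normK ?num_real // mulrAC expr2 mulfK ?gt_eqF //.
lra.
Qed.

Lemma trace_norm_spectral_le (c : 'I_M -> R) :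
  trace_norm (\sum_j (c j)%:C%C *: P j) <= \sum_j `|c j| * complex.Re (\tr (P j)).
Proof.
rewrite /trace_norm /psd_sqrt; case: pselect => [h|_]; last first.
  rewrite linear0; apply: sumr_ge0 => j _.
  by rewrite mulr_ge0 ?Re_mxtrace_orth_proj_ge0.
case: (cid h) => S [[S_herm _] SS] /=; apply: Re_mxtrace_herm_le => //.
rewrite SS dagger_spectral spectral_mulmx; apply: eq_bigr => j _.
by rewrite -rmorphM expr2.
Qed.

Lemma trace_norm_normalized_sub_proj_le (w : 'I_M -> R) (i0 : 'I_M) :
  (forall j, 0 <= w j) -> 0 < w i0 -> P i0 != 0 ->
  trace_norm ((\tr (\sum_j (w j)%:C%C *: P j))^-1 *: (\sum_j (w j)%:C%C *: P j)
              - (\tr (P i0))^-1 *: P i0)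
  <= 2 * (1 - w i0 * complex.Re (\tr (P i0)) / \sum_j w j * complex.Re (\tr (P j))).
Proof.
move=> w_ge0 w0_gt0 P0_neq0.
pose D j := complex.Re (\tr (P j)); pose Z := \sum_j w j * D j.
have D_ge0 j : 0 <= D j := Re_mxtrace_orth_proj_ge0 (P_proj j).
have D0_gt0 : 0 < D i0 := Re_mxtrace_orth_proj_gt0 (P_proj i0) P0_neq0.
have Z_gt0 : 0 < Z.
  rewrite /Z (bigD1 i0) //= ltr_pwDl ?mulr_gt0 // sumr_ge0 // => j _.
  exact: mulr_ge0.
pose c j := w j / Z - (j == i0)%:R / D i0.
have sigmaE : (Z%:C%C)^-1 *: (\sum_j (w j)%:C%C *: P j) - ((D i0)%:C%C)^-1 *: P i0
    = \sum_j (c j)%:C%C *: P j.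
  have deltaE : \sum_j ((j == i0)%:R / D i0)%:C%C *: P j = (D i0)^-1%:C%C *: P i0.
    rewrite (bigD1 i0) //= eqxx mulr1n mul1r big1 ?addr0 // => j /negbTE->.
    by rewrite mul0r rmorph0 scale0r.
  under [RHS]eq_bigr do rewrite rmorphB scalerBl.
  rewrite sumrB deltaE fmorphV scaler_sumr; congr (_ - _).
  by apply: eq_bigr => j _; rewrite scalerA -fmorphV -rmorphM mulrC.
rewrite mxtrace_spectral -(mxtrace_orth_proj_real (P_proj i0)) sigmaE.
suff <- : \sum_j `|c j| * D j = 2 * (1 - w i0 * D i0 / Z).
  exact: trace_norm_spectral_le.
have p_ge0 j : 0 <= w j * D j / Z by rewrite divr_ge0 ?mulr_ge0 // ltW.
have p_sum : \sum_j w j * D j / Z = 1 by rewrite -mulr_suml divff ?gt_eqF.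
rewrite -(sum_norm_sub_delta i0 p_ge0 p_sum); apply: eq_bigr => j _.
rewrite -{1}(ger0_norm (D_ge0 j)) -normrM mulrBl mulrAC.
by case: eqP => [->|_]; rewrite /= ?mulr0n ?mul0r // mul1r mulVf ?gt_eqF.
Qed.

End SpectralCalculus.

Section GibbsWeights.
Local Set Implicit Arguments.
Local Unset Strict Implicit.
Variable R : realType.

Lemma gibbs_ground_weight_ge (n : nat) (lam D : nat -> R) (N beta eps : R) :
  (forall i j, (i < j < n.+2)%N -> lam i < lam j) ->
  (forall j, (j < n.+2)%N -> 0 < D j) ->
  \sum_(j < n.+2) D j = N ->
  0 < eps < 1 -> 0 <= beta ->
  beta = (lam 1%N - lam 0%N)^-1 * ln ((1 - eps) / eps * ((N - D 0%N) / D 0%N)) ->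
  1 - eps <= expR (- beta * lam 0%N) * D 0%N / \sum_(j < n.+2) expR (- beta * lam j) * D j.
Proof.
move=> lam_lt D_gt0 D_sum /andP[eps_gt0 eps_lt1] beta_ge0 beta_def.
pose e j := expR (- beta * lam j).
have split_sum (f : nat -> R) : \sum_(j < n.+2) f j = f 0%N + \sum_(j < n.+1) f j.+1.
  by rewrite big_ord_recl; congr (_ + _); apply: eq_bigr => j _; rewrite lift0.
pose W := \sum_(j < n.+1) D j.+1; pose Y := \sum_(j < n.+1) e j.+1 * D j.+1.
have W_def : N - D 0%N = W by rewrite -D_sum split_sum addrC addKr.
have W_gt0 : 0 < W.
  rewrite /W big_ord_recl ltr_pwDl ?D_gt0 //.
  by apply: sumr_ge0 => j _; rewrite ltW // D_gt0 // ltnS ltn_ord.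
pose K := (1 - eps) / eps * (W / D 0%N).
have K_gt0 : 0 < K by rewrite !mulr_gt0 ?invr_gt0 ?subr_gt0 ?D_gt0.
have gap_gt0 : 0 < lam 1%N - lam 0%N by rewrite subr_gt0 lam_lt.
have e1E : e 1%N = e 0%N / K.
  rewrite /e (_ : - beta * lam 1%N = - beta * lam 0%N - beta * (lam 1%N - lam 0%N)); last by ring.
  by rewrite expRD beta_def W_def -/K mulrAC mulVf ?gt_eqF // mul1r expRN lnK.
have Y_le : Y <= e 1%N * W.
  rewrite /Y /W mulr_sumr; apply: ler_sum => j _.
  have Dj_gt0 : 0 < D j.+1 by rewrite D_gt0 // ltnS.
  rewrite ler_wpM2r ?(ltW Dj_gt0) // /e ler_expR ler_wnM2l ?oppr_le0 //.
  have [->|j_gt0] := posnP j; first by [].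
  by rewrite ltW // lam_lt // ltnS j_gt0 ltnS ltn_ord.
have Y_ge0 : 0 <= Y.
  by apply: sumr_ge0 => j _; rewrite mulr_ge0 ?expR_ge0 // ltW // D_gt0 // ltnS.
have Z_gt0 : 0 < e 0%N * D 0%N + Y by rewrite ltr_wpDr // mulr_gt0 ?expR_gt0 ?D_gt0.
rewrite (split_sum (fun j => e j * D j)) -/Y ler_pdivlMr //.
have e1W : e 1%N * W = e 0%N * D 0%N * eps / (1 - eps).
  by rewrite e1E /K; field; rewrite ?gt_eqF ?subr_gt0 ?D_gt0.
have : Y * (1 - eps) <= e 0%N * D 0%N * eps.
  by rewrite -ler_pdivlMr ?subr_gt0 // -e1W.
rewrite -/(e 0%N); nra.
Qed.

End GibbsWeights.

Theorem corollary1 (R : realType) (d M : nat) (H : 'M[R[i]]_d)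
  (lam : nat -> R) (Pi : nat -> 'M[R[i]]_d) (eps beta : R) :
  herm_mx H ->
  (2 <= M)%N ->
  (forall i j : nat, (i < j < M)%N -> lam i < lam j) ->
  (forall i : nat, (i < M)%N -> orth_proj (Pi i)) ->
  (forall i : nat, (i < M)%N -> Pi i != 0) ->
  (forall i j : nat, (i < M)%N -> (j < M)%N -> i <> j -> Pi i *m Pi j = 0) ->
  \sum_(i < M) Pi i = 1%:M ->
  H = \sum_(i < M) (lam i)%:C%C *: Pi i ->
  0 < eps < 1 ->
  beta = (lam 1%N - lam 0%N)^-1 *
         ln (((1 - eps) / eps) *
             ((d%:R - complex.Re (\tr (Pi 0%N))) / complex.Re (\tr (Pi 0%N)))) ->
  0 <= beta ->
  let rho := expm ((- beta)%:C%C *: H) in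
  let sigma := (\tr rho)^-1 *: rho - (\tr (Pi 0%N))^-1 *: Pi 0%N in
  trace_norm sigma / 2 <= eps.
Proof.
move=> _; case: M => [|[|n]] // _ lam_lt Pi_proj Pi_neq0 Pi_orth Pi_sum H_def eps01
  beta_def beta_ge0; cbv zeta.
pose P (j : 'I_n.+2) := Pi j.
have P_res : resolution_of_identity P.
  split=> [j|i j /eqP ij|//]; first exact: Pi_proj.
  by apply: Pi_orth => // /val_inj.
have D_gt0 j : (j < n.+2)%N -> 0 < complex.Re (\tr (Pi j)).
  by move=> j_lt; apply: Re_mxtrace_orth_proj_gt0; [exact: Pi_proj | exact: Pi_neq0].
have D_sum : \sum_(j < n.+2) complex.Re (\tr (Pi j)) = d%:R.
  by rewrite -raddf_sum (sum_mxtrace_proj P_res) raddfMn.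
have -> : (- beta)%:C%C *: H = \sum_(j < n.+2) (- beta * lam j)%:C%C *: P j.
  by rewrite H_def scaler_sumr; apply: eq_bigr => j _; rewrite scalerA -rmorphM.
rewrite (expm_spectral P_res) ler_pdivrMr //.
have w_ge0 (j : 'I_n.+2) : 0 <= expR (- beta * lam j) := expR_ge0 _.
apply: le_trans (trace_norm_normalized_sub_proj_le P_res (i0 := ord0) w_ge0
  (expR_gt0 _) (Pi_neq0 0%N isT)) _.
have := gibbs_ground_weight_ge lam_lt D_gt0 D_sum eps01 beta_ge0 beta_def.
rewrite /P /=; lra.
Qed.
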